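(* Let $F$ be a field of characteristic zero and let $D$ be a derivation of the Lie algebra $W^*(1,0)$ with $D(\partial)=0$. Then $D=f\,\mathrm{ad}_{\partial}+S$ for some $f\in F$ and some scalar derivation $S$ of $W^*(1,0)$.
   Context: $W^*(1,0)$ is the Lie algebra over $F$ with basis $\{e^{ax}x^i\partial: a\in\mathbb Z, i\in\mathbb N\}$ ($\mathbb N$ the nonnegative integers), viewed as vector fields $f\partial$ with $f$ in the $F$-algebra $F[e^{\pm x},x]$ (basis $e^{ax}x^i$, multiplication adding exponents, $\partial(e^{ax}x^i)=ae^{ax}x^i+ie^{ax}x^{i-1}$), with bracket $[f\partial,g\partial]=(f\partial(g)-g\partial(f))\partial$; $\partial$ denotes the basis element $e^{0x}x^0\partial$ and $\mathrm{ad}_\partial=[\partial,\cdot]$. A derivation $D$ is a scalar derivation if for every basis element $l$ one has $D(l)=f_l\,l$ for some scalar $f_l\in F$. *)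

From HB Require Import structures.
From mathcomp Require Import all_boot all_order all_algebra.
From mathcomp Require Import finmap.
From mathcomp Require Export monalg.
Set Implicit Arguments. Unset Strict Implicit. Unset Printing Implicit Defensive.
Import Order.TTheory GRing.Theory Num.Theory.
Local Open Scope ring_scope.

(* The F-algebra F[e^{+-x}, x]: the free F-module on the basis e^{ax}x^i,
   indexed by k = (a, i) : int * nat.  The basis element e^{ax}x^i is << (a,i) >>.
   A vector field f d is identified with its coefficient f, so W^*(1,0) has the
   same carrier, with basis e^{ax}x^i d = << (a,i) >>. *)
Definition Wstar (F : fieldType) := {malg F[(int * nat)%type]}.

Section W.
Variable F : fieldType.
Local Notation A := (Wstar F).

Definition ebasis (a : int) (i : nat) : A := << (a, i) >>.

Definition amul (f g : A) : A :=
  \sum_(k <- msupp f) \sum_(l <- msupp g)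
     (f@_k * g@_l) *: ebasis (k.1 + l.1) (k.2 + l.2)%N.

Definition aderiv (f : A) : A :=
  \sum_(k <- msupp f)
     f@_k *: ((k.1)%:~R *: ebasis k.1 k.2 + (k.2)%:R *: ebasis k.1 (k.2).-1).

(* [f d, g d] = (f d(g) - g d(f)) d *)
Definition wbracket (f g : A) : A := amul f (aderiv g) - amul g (aderiv f).

Definition wpartial : A := ebasis 0 0.

Definition ad_partial (u : A) : A := wbracket wpartial u.

Definition is_derivation (D : A -> A) : Prop :=
  [/\ (forall u v, D (u + v) = D u + D v),
      (forall (c : F) u, D (c *: u) = c *: D u) &
      (forall u v, D (wbracket u v) = wbracket (D u) v + wbracket u (D v))].

Definition is_scalar_derivation (S : A -> A) : Prop :=
  is_derivation S /\
  forall (a : int) (i : nat), exists fl : F, S (ebasis a i) = fl *: ebasis a i.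

End W.

(* Since D(∂) = 0, the derivation D commutes with ad_∂, which acts on
   F[e^{±x}, x] as the derivative.  In characteristic zero the eigenvectors of
   the derivative for the eigenvalue a are the multiples of e^{ax}, and its
   kernel is F·1, so D(e^{ax}) = λ_a e^{ax} and D(x∂) = μ ∂.  Then
   S := D - μ ad_∂ is a derivation that kills ∂ and x∂ and scales each e^{ax}∂.
   Induction on i, bracketing with x∂ (which raises the power of x when a ≠ 0)
   and with e^{x}∂ against e^{-x}x^{i+1}∂ (for a = 0), shows that S scales
   every e^{ax}x^i∂ by the same factor as e^{ax}∂. *)

From HB Require Import structures.
From mathcomp Require Import all_boot all_order all_algebra.
From mathcomp Require Import finmap monalg ring.
Import GRing.Theory.
Local Open Scope ring_scope.

Section MalgLinearExtension.
Context {K : choiceType} {R : nzRingType} {V : lmodType R}.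

Definition malg_ext (h : K -> V) (g : {malg R[K]}) : V :=
  \sum_(k <- msupp g) g@_k *: h k.

Lemma malg_extEw h {d : {fset K}} {g : {malg R[K]}} : (msupp g `<=` d)%fset ->
  malg_ext h g = \sum_(k <- d) g@_k *: h k.
Proof.
move=> le; rewrite /malg_ext (big_fset_incl _ le) // => k _ /mcoeff_outdom ->.
exact: scale0r.
Qed.

Lemma malg_ext_is_linear h : linear (malg_ext h).
Proof.
move=> c u v.
have le := fsubset_trans (msuppD_le _ _) (fsetSU (msupp v) (msuppZ_le c u)).
rewrite (malg_extEw h le) (malg_extEw h (fsubsetUl _ (msupp v))).
rewrite (malg_extEw h (fsubsetUr (msupp u) _)) scaler_sumr -big_split.
by apply: eq_bigr => k _; rewrite mcoeffD mcoeffZ scalerDl scalerA.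
Qed.

HB.instance Definition _ h :=
  GRing.isLinear.Build R {malg R[K]} V *:%R (malg_ext h) (malg_ext_is_linear h).

Lemma malg_extU h k : malg_ext h << k >> = h k.
Proof. by rewrite (malg_extEw h msuppU_le) big_seq_fset1 mcoeffUU scale1r. Qed.

Lemma mcoeffDZ (c d : R) (u v : {malg R[K]}) k :
  (c *: u + d *: v)@_k = c * u@_k + d * v@_k.
Proof. by rewrite mcoeffD !mcoeffZ. Qed.

Lemma malgUZ (c : R) k : << c *g k >> = c *: << k >> :> {malg R[K]}.
Proof. by apply/malgP => k'; rewrite mcoeffZ !mcoeffU mulr_natr. Qed.

Lemma linear_malg_ext {f : {malg R[K]} -> V} :
  linear f -> f =1 malg_ext (fun k => f << k >>).
Proof.
move=> lf; pose fL : {linear _ -> V} := HB.pack f (GRing.isLinear.Build _ _ _ _ f lf).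
move=> u; rewrite -[f u]/(fL u) {1}(monalgE u) linear_sum.
by apply: eq_bigr => k _; rewrite malgUZ linearZ.
Qed.

Lemma malg_linear_eq {f g : {malg R[K]} -> V} : linear f -> linear g ->
  (forall k, f << k >> = g << k >>) -> f =1 g.
Proof.
move=> lf lg E u; rewrite (linear_malg_ext lf) (linear_malg_ext lg).
by apply: eq_bigr => k _; rewrite E.
Qed.
End MalgLinearExtension.

Lemma mcoeff_snd_bounded {T : choiceType} {G : zmodType} (g : {malg G[(T * nat)%type]}) :
  exists N, forall t n, (N <= n)%N -> g@_(t, n) = 0.
Proof.
exists (\max_(k <- msupp g) k.2).+1 => t n le_N; apply: mcoeff_outdom.
apply: contraTN le_N => g_tn; rewrite -ltnNge ltnS.
exact: (@leq_bigmax_seq _ _ xpredT (fun k : T * nat => k.2) _ g_tn).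
Qed.

Lemma nat_downward_ind (P : nat -> Prop) N :
  (forall n, (N <= n)%N -> P n) -> (forall n, P n.+1 -> P n) -> forall n, P n.
Proof.
move=> PN PS n.
suff PN_add : forall d m, (N <= d + m)%N -> P m by exact: (PN_add N n (leq_addr _ _)).
elim=> [|d IHd] m le_N; first exact: PN.
by apply/PS/IHd; rewrite addnS.
Qed.

Lemma pchar0_intr_eq0 {F : fieldType} (charF0 : [pchar F] =i pred0) (z : int) :
  (z%:~R == 0 :> F) = (z == 0).
Proof.
have natr_eq0 := (pcharf0P F).1 charF0.
by case: z => n; rewrite ?NegzE ?mulrNz ?oppr_eq0 -pmulrn natr_eq0.
Qed.

Lemma eigenvector_of_combination {F : fieldType} {V : lmodType F} (f : V -> V)
    {l b c : F} {x y : V} :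
  {morph f : u v / u + v} -> scalable f -> b != 0 ->
  f y = l *: y -> f (b *: x + c *: y) = l *: (b *: x + c *: y) -> f x = l *: x.
Proof.
move=> fD fZ nzb fy; rewrite fD !fZ fy scalerDr !scalerA (mulrC l c) => /addIr.
by rewrite (mulrC l b) -scalerA => /(scalerI nzb).
Qed.

Section WittBracket.
Context {V : zmodType} {m : V -> V -> V} {d : V -> V}.
Hypotheses (mC : commutative m) (dB : {morph d : x y / x - y})
  (dM : forall u v, d (m u v) = m (d u) v + m u (d v)).

Lemma witt_bracket_derivation u v :
  d (m u (d v) - m v (d u)) =
  (m (d u) (d v) - m v (d (d u))) + (m u (d (d v)) - m (d v) (d u)).
Proof.
by rewrite dB !dM (mC (d v) (d u)) opprD addrACA subrr add0r [RHS]addrC subrKA.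
Qed.
End WittBracket.

Section Wstar.
Context {F : fieldType}.
Local Notation A := (Wstar F).
Implicit Types (f g u v w : A) (a b : int) (i j : nat).

(* A locked copy of the basis: a failed conversion between two distinct basis
   vectors would otherwise unfold the underlying finitely supported functions,
   which is prohibitively slow. *)
Fact emon_key : unit. Proof. by []. Qed.
Definition emon : int -> nat -> A := locked_with emon_key (ebasis F).

Lemma ebasisE a i : ebasis F a i = emon a i.
Proof. by rewrite /emon unlock. Qed.

Lemma malgU_emon k : << k >> = emon k.1 k.2 :> A.
Proof. by case: k => a i; rewrite -ebasisE. Qed.

Lemma mcoeff_emon a i k : (emon a i)@_k = ((a, i) == k)%:R.
Proof. by rewrite -ebasisE mcoeffU. Qed.

Lemma emon_neq0 a i : emon a i != 0.
Proof. by rewrite -ebasisE monalgU_eq0 oner_eq0. Qed.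

Lemma amulC f g : amul f g = amul g f.
Proof.
rewrite /amul exchange_big; apply: eq_bigr => l _; apply: eq_bigr => k _.
by rewrite mulrC addrC addnC.
Qed.

Lemma amulE f g : amul f g =
  \sum_(k <- msupp f) f@_k *: malg_ext (fun l => ebasis F (k.1 + l.1) (k.2 + l.2)) g.
Proof.
apply: eq_bigr => k _; rewrite scaler_sumr.
by apply: eq_bigr => l _; rewrite scalerA.
Qed.

Lemma amul_is_linear f : linear (amul f).
Proof.
move=> c u v; rewrite !amulE scaler_sumr -big_split.
by apply: eq_bigr => k _; rewrite linearP scalerDr !scalerA mulrC.
Qed.

HB.instance Definition _ f :=
  GRing.isLinear.Build F A A *:%R (amul f) (amul_is_linear f).

Lemma amulPl g c u v : amul (c *: u + v) g = c *: amul u g + amul v g.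
Proof. by rewrite !(amulC _ g) linearP. Qed.

Lemma amul_emon a i b j : amul (emon a i) (emon b j) = emon (a + b) (i + j).
Proof.
rewrite -!ebasisE amulE msuppU oner_eq0 big_seq_fset1 mcoeffUU scale1r.
by rewrite malg_extU.
Qed.

Lemma amul1 g : amul (wpartial F) g = g.
Proof.
have id_linear : linear (@id A) by [].
move: g; apply: (malg_linear_eq (amul_is_linear _) id_linear) => k.
by rewrite malgU_emon /wpartial ebasisE amul_emon add0r add0n.
Qed.

Lemma aderiv_is_linear : linear (@aderiv F).
Proof. exact: malg_ext_is_linear. Qed.

HB.instance Definition _ :=
  GRing.isLinear.Build F A A *:%R (@aderiv F) aderiv_is_linear.

Lemma aderiv_emon a i :
  aderiv (emon a i) = a%:~R *: emon a i + i%:R *: emon a i.-1.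
Proof. by rewrite -!ebasisE; exact: (malg_extU _ (a, i)). Qed.

Lemma aderiv_emon0 a : aderiv (emon a 0) = a%:~R *: emon a 0.
Proof. by rewrite aderiv_emon scale0r addr0. Qed.

Lemma aderiv_emon01 : aderiv (emon 0 1) = emon 0 0.
Proof. by rewrite aderiv_emon scale0r add0r scale1r. Qed.

Lemma aderiv_partial : aderiv (wpartial F) = 0.
Proof. by rewrite /wpartial ebasisE aderiv_emon0 scale0r. Qed.

Lemma scale_emon_addn_pred a i j :
  j%:R *: emon a (i + j.-1) = j%:R *: emon a (i + j).-1.
Proof. by case: j => [|j]; rewrite ?scale0r ?addnS. Qed.

Lemma amul_emon_aderiv a i b j : amul (emon a i) (aderiv (emon b j)) =
  b%:~R *: emon (a + b) (i + j) + j%:R *: emon (a + b) (i + j).-1.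
Proof. by rewrite aderiv_emon linearP linearZ /= !amul_emon scale_emon_addn_pred. Qed.

Lemma aderiv_amul_emon a i b j :
  aderiv (amul (emon a i) (emon b j)) =
  amul (aderiv (emon a i)) (emon b j) + amul (emon a i) (aderiv (emon b j)).
Proof.
rewrite [amul (aderiv _) _]amulC !amul_emon_aderiv amul_emon aderiv_emon.
rewrite (addrC b) (addnC j) intrD natrD !scalerDl.
exact: addrACA.
Qed.

Lemma aderiv_amul f g : aderiv (amul f g) = amul (aderiv f) g + amul f (aderiv g).
Proof.
move: f; apply: malg_linear_eq => [c u v|c u v|k] /=.
- by rewrite amulPl linearP.
- by rewrite linearP !amulPl scalerDr addrACA.
move: g; apply: malg_linear_eq => [c u v|c u v|l] /=.
- by rewrite !linearP.
- by rewrite linearP !linearP scalerDr addrACA.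
by rewrite !malgU_emon aderiv_amul_emon.
Qed.

Lemma wbracketC u v : wbracket u v = - wbracket v u.
Proof. by rewrite /wbracket opprB. Qed.

Lemma wbracket_is_linear u : linear (wbracket u).
Proof.
move=> c v w; rewrite /wbracket !linearP amulPl /= scalerBr opprD.
exact: addrACA.
Qed.

HB.instance Definition _ u :=
  GRing.isLinear.Build F A A *:%R (wbracket u) (wbracket_is_linear u).

Lemma wbracketBr u : {morph (@wbracket F) u : v w / v - w}.
Proof. exact: linearB. Qed.

Lemma wbracketZr u c v : wbracket u (c *: v) = c *: wbracket u v.
Proof. exact: linearZ. Qed.

Lemma wbracketZl w c u : wbracket (c *: u) w = c *: wbracket u w.
Proof. by rewrite (wbracketC _ w) (wbracketC u w) linearZ scalerN. Qed.

Lemma wbracketBl w : {morph (@wbracket F)^~ w : u v / u - v}.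
Proof.
move=> u v /=; rewrite (wbracketC (u - v)) wbracketBr opprB.
by rewrite (wbracketC u) (wbracketC v) opprK addrC.
Qed.

Lemma wbracket0l w : wbracket 0 w = 0.
Proof. by rewrite wbracketC (linear0 (wbracket w)) oppr0. Qed.

Lemma ad_partialE u : ad_partial u = aderiv u.
Proof. by rewrite /ad_partial /wbracket amul1 aderiv_partial linear0 subr0. Qed.

Lemma aderiv_wbracket u v :
  aderiv (wbracket u v) = wbracket (aderiv u) v + wbracket u (aderiv v).
Proof. exact: (witt_bracket_derivation amulC (linearB _) aderiv_amul). Qed.

Lemma wbracket_emon a i b j : wbracket (emon a i) (emon b j) =
  (b - a)%:~R *: emon (a + b) (i + j) + (j%:R - i%:R) *: emon (a + b) (i + j).-1.
Proof.
rewrite /wbracket !amul_emon_aderiv (addrC b) (addnC j) intrB.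
by rewrite !scalerBl opprD addrACA.
Qed.

Lemma wbracket_emon01 b i :
  wbracket (emon 0 1) (emon b i) = b%:~R *: emon b i.+1 + (i%:R - 1) *: emon b i.
Proof. by rewrite wbracket_emon subr0 add0r add1n. Qed.

Lemma wbracket_emon1N1 i :
  wbracket (emon 1 0) (emon (-1) i) = (-2)%:~R *: emon 0 i + i%:R *: emon 0 i.-1.
Proof. by rewrite wbracket_emon subr0. Qed.

Lemma mcoeff_aderiv v b j :
  (aderiv v)@_(b, j) = b%:~R * v@_(b, j) + j.+1%:R * v@_(b, j.+1).
Proof.
have lhs_linear : linear (fun v : A => (aderiv v)@_(b, j) : F^o).
  by move=> c u w; rewrite linearP mcoeffD mcoeffZ.
have rhs_linear :
    linear (fun v : A => b%:~R * v@_(b, j) + j.+1%:R * v@_(b, j.+1) : F^o).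
  by move=> c u w; rewrite !mcoeffD !mcoeffZ /GRing.scale /=; ring.
move: v; apply: (malg_linear_eq lhs_linear rhs_linear) => -[a i].
rewrite malgU_emon aderiv_emon mcoeffDZ !mcoeff_emon !xpair_eqE.
have [<-|nab] := eqVneq a b; last by rewrite !andFb !mulr0 addr0.
rewrite !andTb; congr (_ + _); case: i => [|i]; first by rewrite !mul0r mulr0.
by rewrite /= eqSS; case: eqP => [->|]; rewrite ?mulr0.
Qed.

Lemma aderiv_eigen (charF0 : [pchar F] =i pred0) v a :
  aderiv v = a%:~R *: v -> v = v@_(a, 0%N) *: emon a 0.
Proof.
move=> Dv.
have coef_rec b j : (b - a)%:~R * v@_(b, j) + j.+1%:R * v@_(b, j.+1) = 0.
  have := mcoeff_aderiv v b j; rewrite Dv mcoeffZ => Ebj.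
  by rewrite intrB mulrBl addrAC -Ebj subrr.
have [N vN] := mcoeff_snd_bounded v.
have off_a b : b != a -> forall j, v@_(b, j) = 0.
  move=> nba; apply: (@nat_downward_ind (fun j => v@_(b, j) = 0) N (vN b)).
  move=> j vbj1; move: (coef_rec b j); rewrite vbj1 mulr0 addr0 => /eqP.
  by rewrite mulf_eq0 pchar0_intr_eq0 // subr_eq0 (negbTE nba) => /eqP.
have at_a j : v@_(a, j.+1) = 0.
  move: (coef_rec a j); rewrite subrr mul0r add0r => /eqP.
  by rewrite mulf_eq0 ((pcharf0P F).1 charF0) => /eqP.
apply/malgP => -[b j]; rewrite mcoeffZ mcoeff_emon xpair_eqE.
have [<-|nab] := eqVneq a b; last by rewrite /= mulr0 off_a // eq_sym.
by case: j => [|j]; rewrite ?mulr1 // at_a mulr0.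
Qed.

Lemma ad_partial_derivation : is_derivation (@ad_partial F).
Proof.
split=> [u v|c u|u v]; rewrite !ad_partialE.
- exact: linearD.
- exact: linearZ.
- exact: aderiv_wbracket.
Qed.

Lemma derivationB {D1 D2 : A -> A} c : is_derivation D1 -> is_derivation D2 ->
  is_derivation (fun u => D1 u - c *: D2 u).
Proof.
case=> D1D D1Z D1br [D2D D2Z D2br]; split=> [u v|k u|u v].
- by rewrite D1D D2D scalerDr opprD addrACA.
- by rewrite D1Z D2Z scalerBr !scalerA mulrC.
rewrite D1br D2br wbracketBl wbracketZl wbracketBr wbracketZr.
by rewrite scalerDr opprD addrACA.
Qed.

Lemma derivation_commute_aderiv {D : A -> A} : is_derivation D -> D (wpartial F) = 0 ->
  forall u, D (aderiv u) = aderiv (D u).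
Proof.
by case=> _ _ Dbr D1 u; rewrite -!ad_partialE /ad_partial Dbr D1 wbracket0l add0r.
Qed.

Lemma derivation_wbracket_eigen {D : A -> A} {u v l m} : is_derivation D ->
  D u = l *: u -> D v = m *: v -> D (wbracket u v) = (l + m) *: wbracket u v.
Proof. by case=> _ _ Dbr Du Dv; rewrite Dbr Du Dv wbracketZl wbracketZr scalerDl. Qed.
End Wstar.

Section ScalarOnBasis.
Context {F : fieldType}.
Variables (S : Wstar F -> Wstar F) (nu : int -> F).
Hypotheses (charF0 : [pchar F] =i pred0) (S_der : is_derivation S)
  (S_1 : S (emon 0 0) = 0) (S_x : S (emon 0 1) = 0)
  (S_exp : forall a, S (emon a 0) = nu a *: emon a 0).

Lemma nu0 : nu 0 = 0.
Proof.
have := S_exp 0; rewrite S_1 => /(congr1 (mcoeff (0, 0%N))).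
by rewrite mcoeff0 mcoeffZ mcoeff_emon eqxx mulr1.
Qed.

(* From [e^x ∂, e^{-x} ∂] = -2 ∂ and S ∂ = 0. *)
Lemma nu1N1 : nu 1 + nu (-1) = nu 0.
Proof.
have := derivation_wbracket_eigen S_der (S_exp 1) (S_exp (-1)).
case: S_der => _ SZ _; rewrite wbracket_emon1N1 scale0r addr0 SZ S_1 scaler0 nu0.
move/esym/eqP; rewrite !scaler_eq0 pchar0_intr_eq0 // (negbTE (emon_neq0 _ _)).
by rewrite !orbF => /eqP.
Qed.

Lemma derivation_scalar_on_emon i a : S (emon a i) = nu a *: emon a i.
Proof.
case: (S_der) => SD SZ _.
have S_x0 : S (emon 0 1) = 0 *: emon 0 1 by rewrite S_x scale0r.
elim: i a => [|i IHi] a; first exact: S_exp.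
have S_nz b : b != 0 -> S (emon b i.+1) = nu b *: emon b i.+1.
  move=> nzb; have := derivation_wbracket_eigen S_der S_x0 (IHi b).
  rewrite add0r wbracket_emon01.
  by apply: (eigenvector_of_combination S SD SZ _ (IHi b)); rewrite pchar0_intr_eq0.
have [->|] := eqVneq a 0; last exact: S_nz.
have := derivation_wbracket_eigen S_der (S_exp 1) (S_nz (-1) isT).
rewrite nu1N1 wbracket_emon1N1.
by apply: (eigenvector_of_combination S SD SZ _ (IHi 0)); rewrite pchar0_intr_eq0.
Qed.
End ScalarOnBasis.

Theorem lemma4 (F : fieldType) (charF0 : [pchar F] =i pred0)
  (D : Wstar F -> Wstar F) :
  is_derivation D -> D (wpartial F) = 0 ->
  exists (f : F) (S : Wstar F -> Wstar F),
    is_scalar_derivation S /\ forall u, D u = f *: ad_partial u + S u.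
Proof.
move=> D_der D1; have [_ DZ _] := D_der.
have D_aderiv := derivation_commute_aderiv D_der D1.
pose lam a := (D (emon a 0))@_(a, 0%N).
have D_exp a : D (emon a 0) = lam a *: emon a 0.
  by apply: (aderiv_eigen charF0); rewrite -D_aderiv aderiv_emon0 DZ.
pose mu := (D (emon 0 1))@_(0, 0%N).
have D_x : D (emon 0 1) = mu *: emon 0 0.
  apply: (aderiv_eigen charF0 _ 0).
  by rewrite -D_aderiv aderiv_emon01 -ebasisE D1 scale0r.
pose S u := D u - mu *: ad_partial u.
exists mu, S; split; last by move=> u; rewrite addrC subrK.
have S_der : is_derivation S := derivationB mu D_der ad_partial_derivation.
split=> // a i; exists (lam a - mu * a%:~R); rewrite ebasisE.
apply: (derivation_scalar_on_emon S (fun a => lam a - mu * a%:~R) charF0 S_der)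
  => [||b]; rewrite /S ad_partialE.
- by rewrite -ebasisE D1 aderiv_partial scaler0 subr0.
- by rewrite D_x aderiv_emon01 subrr.
- by rewrite D_exp aderiv_emon0 scalerBl -scalerA.
Qed.
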